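(* Let $\mathcal{S},\mathcal{A}$ be finite, $\gamma\in(0,1)$, and consider an MDP with $(\tilde r(s,a),\tilde s')\sim P(\cdot,\cdot\mid s,a)$, $\tilde r(s,a)\in[0,1]$ almost surely. Let $\rho$ be a coherent risk measure and $d$ a probability distribution on $\mathcal{S}$ with $0<d(s)\le1$. Let $\pi_\theta$ be the softmax policy $\pi_\theta(a\mid s)=\exp(\theta(s,a))/\sum_b\exp(\theta(s,b))$ and let $$\theta_{t+1}=\theta_t+\eta\,\nabla_\theta\Big[\sum_s d(s)\sum_a\pi_\theta(a\mid s)Q^{\pi_t}(s,a)\Big]\Big|_{\theta=\theta_t},$$ with $\pi_t=\pi_{\theta_t}$ and $Q^{\pi_t}$ held fixed. If $\eta\le(1-\gamma)/5$, then for all $s\in\mathcal{S}$, $$\sum_a\pi_{t+1}(a\mid s)Q^{\pi_t}(s,a)\ge\sum_a\pi_t(a\mid s)Q^{\pi_t}(s,a).$$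
   Context: A coherent risk measure $\rho$ satisfies concavity, monotonicity ($\tilde x\le\tilde y\Rightarrow\rho(\tilde x)\le\rho(\tilde y)$), translation invariance $\rho(\tilde x+c)=\rho(\tilde x)+c$, and positive homogeneity $\rho(\lambda\tilde x)=\lambda\rho(\tilde x)$ for $\lambda\ge0$. For a stochastic policy $\pi$, $Q^\pi$ is the unique fixed point of $(\mathcal{T}^\pi Q)(s,a)=\rho\big(\tilde r(s,a)+\gamma\sum_{a'}\pi(a'\mid\tilde s')Q(\tilde s',a')\big)$, $\rho$ taken over the joint law of $(\tilde r(s,a),\tilde s')$. *)

From HB Require Import structures.
From mathcomp Require Import all_boot all_order all_algebra.
From mathcomp Require Import all_classical all_reals all_analysis.
Set Implicit Arguments. Unset Strict Implicit. Unset Printing Implicit Defensive.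
Import Order.TTheory GRing.Theory Num.Theory.
Import numFieldNormedType.Exports.
Local Open Scope classical_set_scope.
Local Open Scope ring_scope.

Definition bmeas (d : measure_display) (Om : measurableType d) (R : realType)
  (X : Om -> R) : Prop :=
  measurable_fun setT X /\ exists M : R, forall w, `|X w| <= M.

Record coherent (d : measure_display) (Om : measurableType d) (R : realType)
  (P : probability Om R) (rho : (Om -> R) -> R) : Prop := {
  coh_concave : forall (X Y : Om -> R) (l : R), bmeas X -> bmeas Y ->
    0 <= l <= 1 ->
    l * rho X + (1 - l) * rho Y <= rho (fun w => l * X w + (1 - l) * Y w);
  coh_monotone : forall X Y : Om -> R, bmeas X -> bmeas Y ->
    {ae P, forall w, X w <= Y w} -> rho X <= rho Y;
  coh_transl : forall (X : Om -> R) (c : R), bmeas X ->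
    rho (fun w => X w + c) = rho X + c;
  coh_homog : forall (X : Om -> R) (l : R), bmeas X -> 0 <= l ->
    rho (fun w => l * X w) = l * rho X }.

Definition softmax (R : realType) (S A : finType) (th : S -> A -> R) (s : S) (a : A) : R :=
  expR (th s a) / \sum_(b : A) expR (th s b).

(* risk-sensitive Bellman operator T^pi; the MDP transition P(.,.|s,a) is realised
   by the random pair (r s a, s' s a) on the probability space *)
Definition bellman (d : measure_display) (Om : measurableType d) (R : realType)
  (S A : finType) (rho : (Om -> R) -> R) (r : S -> A -> Om -> R) (s' : S -> A -> Om -> S)
  (gamma : R) (pi : S -> A -> R) (Q : S -> A -> R) (s : S) (a : A) : R :=
  rho (fun w => r s a w + gamma * \sum_(a' : A) pi (s' s a w) a' * Q (s' s a w) a').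

Definition is_Qpi (d : measure_display) (Om : measurableType d) (R : realType)
  (S A : finType) (rho : (Om -> R) -> R) (r : S -> A -> Om -> R) (s' : S -> A -> Om -> S)
  (gamma : R) (pi : S -> A -> R) (Q : S -> A -> R) : Prop :=
  (forall s a, Q s a = bellman rho r s' gamma pi Q s a) /\
  (forall Q' : S -> A -> R, (forall s a, Q' s a = bellman rho r s' gamma pi Q' s a) -> Q' = Q).

Definition upd (R : realType) (S A : finType) (th : S -> A -> R) (s : S) (a : A) (x : R) :
  S -> A -> R :=
  fun s1 a1 => if (s1 == s) && (a1 == a) then x else th s1 a1.

Definition grad (R : realType) (S A : finType) (J : (S -> A -> R) -> R)
  (th : S -> A -> R) (s : S) (a : A) : R :=
  derive1 (fun x : R => J (upd th s a x)) (th s a).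

Definition surrogate (R : realType) (S A : finType) (dist : S -> R) (Q : S -> A -> R)
  (th : S -> A -> R) : R :=
  \sum_(s : S) dist s * \sum_(a : A) softmax th s a * Q s a.

From HB Require Import structures.
From mathcomp Require Import all_boot all_order all_algebra.
From mathcomp Require Import all_classical all_reals all_analysis.
From mathcomp Require Import ring.
Set Implicit Arguments. Unset Strict Implicit. Unset Printing Implicit Defensive.
Import Order.TTheory GRing.Theory Num.Theory.
Import numFieldNormedType.Exports.
Local Open Scope classical_set_scope.
Local Open Scope ring_scope.

(* The partial derivative of the surrogate in theta(s,a) is
   d(s) pi(a|s) (Q(s,a) - V(s)), V(s) being the pi-average of Q(s,.).  One gradient
   step therefore multiplies the unnormalised softmax weight of a by
   exp(c_a (Q(s,a) - V(s))) with c_a = eta d(s) pi(a|s) >= 0, i.e. it tilts the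
   weights towards the actions with positive advantage.  Such a tilt can only raise
   the weighted mean of Q(s,.): since t <= exp(c t) t for c >= 0, the tilted
   weights give the advantages a nonnegative total, whereas the old weights give
   them total zero. *)

Lemma is_derive_expR_ratio (R : realType) (q K1 K2 x : R) : 0 <= K2 ->
  is_derive x 1 (fun y => (expR y * q + K1) / (expR y + K2))
    (expR x / (expR x + K2) * (q - (expR x * q + K1) / (expR x + K2))).
Proof.
move=> K2_ge0.
have den_neq0 : expR x + K2 != 0 by rewrite gt_eqF // ltr_pwDl // expR_gt0.
have Dden : is_derive x 1 (fun y => expR y + K2) (expR x).
  by apply: is_derive_eq; rewrite addr0.
have Dnum : is_derive x 1 (fun y => expR y * q + K1) (expR x * q).
  by apply: is_derive_eq; rewrite scaler0 add0r addr0 [RHS]mulrC.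
have := is_deriveM Dnum (is_deriveV (f := fun y => expR y + K2) den_neq0 Dden).
by move/is_derive_eq; apply; rewrite /GRing.scale /=; field.
Qed.

Section WeightedMean.
Variables (R : realType) (A : finType).

Definition weighted_mean (p q : A -> R) : R := (\sum_a p a * q a) / \sum_a p a.

Lemma ler_id_expRM (c t : R) : 0 <= c -> t <= expR (c * t) * t.
Proof.
move=> c_ge0; have [t_lt0|t_gt0|->] := ltgtP t 0.
- by rewrite ler_nMl // expR_le1 mulr_ge0_le0 // ltW.
- by rewrite ler_pMl // -expR0 ler_expR mulr_ge0 // ltW.
- by rewrite mulr0.
Qed.

Lemma sum_dev_weighted_mean (p q : A -> R) : (forall a, 0 <= p a) ->
  \sum_a p a * (q a - weighted_mean p q) = 0.
Proof.
move=> p_ge0.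
have [/(psumr_eq0P (fun a _ => p_ge0 a)) p0|D_neq0] := eqVneq (\sum_a p a) 0.
  by apply: big1 => a _; rewrite p0 ?mul0r.
under eq_bigr do rewrite mulrBr.
by rewrite sumrB -mulr_suml mulrC divfK // subrr.
Qed.

Lemma weighted_mean_tilt_ge (p q c : A -> R) :
  (forall a, 0 <= p a) -> (forall a, 0 <= c a) ->
  weighted_mean p q <=
  weighted_mean (fun a => p a * expR (c a * (q a - weighted_mean p q))) q.
Proof.
move=> p_ge0 c_ge0; set m := weighted_mean p q; set p' := fun a => _.
have p'_ge0 a : 0 <= p' a by rewrite mulr_ge0 ?expR_ge0.
have [/(psumr_eq0P (fun a _ => p'_ge0 a)) p'0|D'_neq0] := eqVneq (\sum_a p' a) 0.
  (* all weights vanish, and both means are 0 since x / 0 = 0 *)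
  have p0 a : p a = 0.
    by apply/eqP; have /eqP := p'0 a isT; rewrite mulf_eq0 expR_eq0 orbF.
  by rewrite /m /weighted_mean !big1 ?mul0r // => a _; rewrite ?p0 ?p'0 ?mul0r.
have D'_gt0 : 0 < \sum_a p' a by rewrite lt0r D'_neq0 sumr_ge0.
rewrite /weighted_mean ler_pdivlMr // -subr_ge0 mulr_sumr -sumrB.
rewrite -[X in X <= _](@sum_dev_weighted_mean p q p_ge0) -/m; apply: ler_sum => a _.
by rewrite [m * _]mulrC -mulrBr /p' -mulrA ler_wpM2l // ler_id_expRM.
Qed.
End WeightedMean.

Section Softmax.
Variables (R : realType) (S A : finType).
Implicit Types (th Q : S -> A -> R) (dist : S -> R).

Lemma softmax_ge0 th s a : 0 <= softmax th s a.
Proof. by rewrite divr_ge0 ?expR_ge0 ?sumr_ge0 // => b _; rewrite expR_ge0. Qed.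

Lemma softmax_expectation th Q s :
  \sum_a softmax th s a * Q s a = weighted_mean (fun a => expR (th s a)) (Q s).
Proof. by rewrite /weighted_mean mulr_suml; apply: eq_bigr => a _; rewrite mulrAC. Qed.

Lemma grad_surrogate dist Q th s a :
  grad (surrogate dist Q) th s a =
  dist s * softmax th s a * (Q s a - \sum_b softmax th s b * Q s b).
Proof.
pose C := \sum_(s1 | s1 != s) dist s1 * \sum_b softmax th s1 b * Q s1 b.
pose K1 := \sum_(b | b != a) expR (th s b) * Q s b.
pose K2 := \sum_(b | b != a) expR (th s b).
have K2_ge0 : 0 <= K2 by apply: sumr_ge0 => b _; exact: expR_ge0.
have sum_split (F : A -> R) : \sum_b F b = F a + \sum_(b | b != a) F b by rewrite (bigD1 a).
have surrogate_upd : (fun x => surrogate dist Q (upd th s a x)) =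
    (fun x => C + dist s * ((expR x * Q s a + K1) / (expR x + K2))).
  apply: funext => x; rewrite /surrogate (bigD1 s) //= addrC; congr (_ + _).
    apply: eq_bigr => s1 s1_neq; congr (_ * _); apply: eq_bigr => b _.
    by rewrite /softmax /upd (negbTE s1_neq).
  rewrite softmax_expectation /weighted_mean !sum_split /upd !eqxx /=.
  by congr (_ * ((_ + _) / (_ + _))); apply: eq_bigr => b /negbTE ->.
have := is_deriveD (is_derive_cst C (th s a) 1)
  (is_deriveM (is_derive_cst (dist s) (th s a) 1)
     (is_derive_expR_ratio (Q s a) K1 (th s a) K2_ge0)).
rewrite /grad surrogate_upd derive1E => ?; rewrite derive_val.
rewrite softmax_expectation /softmax /weighted_mean !sum_split.
by rewrite !scaler0 add0r addr0 -[RHS]mulrA.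
Qed.

End Softmax.

Theorem lemma3 (R : realType) (S A : finType)
  (d : measure_display) (Om : measurableType d) (P : probability Om R)
  (r : S -> A -> Om -> R) (s' : S -> A -> Om -> S)
  (rho : (Om -> R) -> R) (gamma eta : R) (dist : S -> R)
  (Q : S -> A -> R) (th_t th_t1 : S -> A -> R) :
  0 < gamma < 1 ->
  (forall s a, measurable_fun setT (r s a)) ->
  (forall s a (s0 : S), measurable (s' s a @^-1` [set s0])) ->
  (forall s a, {ae P, forall w, 0 <= r s a w <= 1}) ->
  coherent P rho ->
  (forall s, 0 < dist s <= 1) -> \sum_(s : S) dist s = 1 ->
  is_Qpi rho r s' gamma (softmax th_t) Q ->
  th_t1 = (fun s a => th_t s a + eta * grad (surrogate dist Q) th_t s a) ->
  0 < eta -> eta <= (1 - gamma) / 5 ->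
  forall s : S,
    \sum_(a : A) softmax th_t1 s a * Q s a >= \sum_(a : A) softmax th_t s a * Q s a.
Proof.
move=> _ _ _ _ _ dist_pos _ _ -> eta_gt0 _ s.
pose c a := eta * dist s * softmax th_t s a.
have c_ge0 a : 0 <= c a.
  have /andP[dist_gt0 _] := dist_pos s.
  by rewrite mulr_ge0 ?softmax_ge0 // mulr_ge0 // ltW.
rewrite !softmax_expectation.
set m := weighted_mean _ (Q s).
have tilted : (fun a => expR (th_t s a + eta * grad (surrogate dist Q) th_t s a)) =
    (fun a => expR (th_t s a) * expR (c a * (Q s a - m))).
  apply: funext => a; rewrite grad_surrogate softmax_expectation expRD -/m.
  by congr (_ * expR _); rewrite /c !mulrA.
by rewrite tilted; apply: weighted_mean_tilt_ge => a; rewrite ?expR_ge0.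
Qed.
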